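(* Let $M$ be a monoid and let $X$ be a finite $M$-partial order. Then (i) $\mathrm{Fr}(X)$, with the action $ax=\{ai : i\in x\}$ for $a\in M$, $x\in \mathrm{Fr}(X)$, is a strong $M$-partial order; and (ii) the function $\pi\colon \mathrm{Fr}(X)\to X$ given by $\pi(x)=\max x$ is an epimorphism of $M$-partial orders.
   Context: A monoid acting on a set acts with the identity acting as the identity map. An $M$-partial order is a set $X$ with an action of $M$ and a partial order $\leq_X$ such that $x\leq_X y$ implies $ax\leq_X ay$. It is strong if for all $y\in X$, $a\in M$: $\{ax : x\leq_X y\}=\{x\in X : x\leq_X ay\}$. For $M$-partial orders $X,Y$, a map $f\colon X\to Y$ is an epimorphism if it is onto, $M$-equivariant, and $\leq_Y$ is the image of $\leq_X$ under $f\times f$ (i.e. $y\leq_Y y'$ iff there are $x\leq_X x'$ with $f(x)=y$, $f(x')=y'$). For a finite partial order $X$, $\mathrm{Fr}(X)$ is the set of non-empty subsets of $X$ linearly ordered by $\leq_X$, ordered by: $x\leq_{\mathrm{Fr}(X)} y$ iff $x\subseteq y$ and $i<_X j$ for all $i\in x$ and $j\in y\setminus x$. *)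

From mathcomp Require Import all_boot.
Set Implicit Arguments. Unset Strict Implicit. Unset Printing Implicit Defensive.

Definition is_monoid (M : Type) (mul : M -> M -> M) (one : M) : Prop :=
  (forall a b c, mul a (mul b c) = mul (mul a b) c) /\
  (forall a, mul one a = a) /\ (forall a, mul a one = a).

(* Everything below is stated relative to a carrier predicate D on a type T,
   so that subsets such as Fr(X) of {set X} can be handled directly. *)

Definition is_action (M : Type) (mul : M -> M -> M) (one : M)
  (T : Type) (D : T -> Prop) (act : M -> T -> T) : Prop :=
  (forall a x, D x -> D (act a x)) /\
  (forall x, D x -> act one x = x) /\
  (forall a b x, D x -> act (mul a b) x = act a (act b x)).

Definition is_partial_order (T : Type) (D : T -> Prop) (le : T -> T -> Prop) : Prop :=
  (forall x, D x -> le x x) /\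
  (forall x y, D x -> D y -> le x y -> le y x -> x = y) /\
  (forall x y z, D x -> D y -> D z -> le x y -> le y z -> le x z).

Definition is_MPO (M : Type) (mul : M -> M -> M) (one : M)
  (T : Type) (D : T -> Prop) (act : M -> T -> T) (le : T -> T -> Prop) : Prop :=
  is_action mul one D act /\ is_partial_order D le /\
  (forall a x y, D x -> D y -> le x y -> le (act a x) (act a y)).

Definition is_strong (M T : Type) (D : T -> Prop) (act : M -> T -> T)
  (le : T -> T -> Prop) : Prop :=
  forall (y : T) (a : M), D y ->
    forall z : T, (exists x, D x /\ le x y /\ z = act a x) <-> (D z /\ le z (act a y)).

Definition is_epimorphism (M T U : Type)
  (DT : T -> Prop) (actT : M -> T -> T) (leT : T -> T -> Prop)
  (DU : U -> Prop) (actU : M -> U -> U) (leU : U -> U -> Prop) (f : T -> U) : Prop :=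
  (forall x, DT x -> DU (f x)) /\
  (forall y, DU y -> exists x, DT x /\ f x = y) /\
  (forall a x, DT x -> f (actT a x) = actU a (f x)) /\
  (forall y y', DU y -> DU y' ->
     (leU y y' <-> exists x x', [/\ DT x, DT x', leT x x', f x = y & f x' = y'])).

Definition Fr (X : finType) (le : rel X) (x : {set X}) : Prop :=
  x != set0 /\ (forall i j, i \in x -> j \in x -> le i j \/ le j i).

Definition Fr_le (X : finType) (le : rel X) (x y : {set X}) : Prop :=
  x \subset y /\ (forall i j, i \in x -> j \in y :\: x -> le i j /\ i != j).

Definition Fr_act (M : Type) (X : finType) (act : M -> X -> X) (a : M) (x : {set X})
  : {set X} := [set act a i | i in x].

(* pi(x) = max x (x0 is only a default value, irrelevant on Fr(X)). *)
Definition Fr_max (X : finType) (le : rel X) (x0 : X) (x : {set X}) : X :=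
  odflt x0 [pick i in x | [forall j in x, le j i]].

From mathcomp Require Import all_boot.

Set Implicit Arguments.
Unset Strict Implicit.
Unset Printing Implicit Defensive.

(* A finite chain has a maximum, which [Fr_max] selects; since the action is
   monotone, it carries chains to chains and maxima to maxima, so [Fr_max] is
   equivariant and monotone, and singletons [{y}] and pairs [{y, y'}] (for
   [y <= y']) show it is onto on points and on the order.  Strongness: if
   [z <= a y] in Fr(X), the chain [x = {i in y | a i \in z}] satisfies [a x = z]
   and [x <= y], because an element of [y] outside [x] is sent outside [z],
   hence strictly above every point of [z]. *)

Section FrOrder.

Variables (X : finType) (le : rel X).

Lemma Fr_le_refl (x : {set X}) : Fr_le le x x.
Proof. by split=> // i j _; rewrite setDv inE. Qed.

Lemma Fr_le_anti (x y : {set X}) : Fr_le le x y -> Fr_le le y x -> x = y.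
Proof. by move=> [sxy _] [syx _]; apply/eqP; rewrite eqEsubset sxy. Qed.

Lemma Fr_le_trans (x y z : {set X}) :
  Fr_le le x y -> Fr_le le y z -> Fr_le le x z.
Proof.
move=> [sxy lexy] [syz leyz]; split; first exact: subset_trans syz.
move=> i j xi; rewrite inE => /andP[xNj zj].
have [yj | yNj] := boolP (j \in y); first by apply: lexy; rewrite // inE xNj.
by apply: leyz; [exact: subsetP xi | rewrite inE yNj].
Qed.

Lemma Fr_le_partial_order : is_partial_order (Fr le) (Fr_le le).
Proof.
split=> [x _|]; first exact: Fr_le_refl.
by split=> [x y _ _|x y z _ _ _]; [exact: Fr_le_anti | exact: Fr_le_trans].
Qed.

Lemma Fr_subset (x y : {set X}) : Fr le y -> x \subset y -> x != set0 -> Fr le x.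
Proof. by move=> [_ chain] /subsetP sxy nz_x; split=> // i j /sxy yi /sxy; apply: chain. Qed.

Lemma Fr_le_set1_set2 (y y' : X) :
  le y y' -> Fr_le le [set y] [set y; y'].
Proof.
move=> le_yy'; split; first by rewrite sub1set set21.
by move=> i j /set1P-> /setDP[/set2P[->|->]]; rewrite ?set11 // => /set1P/eqP; rewrite eq_sym.
Qed.

Hypotheses (le_refl : reflexive le) (le_anti : antisymmetric le)
           (le_trans : transitive le).

Lemma Fr_set1 (y : X) : Fr le [set y].
Proof.
split; first by apply/set0Pn; exists y; rewrite inE.
by move=> i j /set1P-> /set1P->; left.
Qed.

Lemma Fr_set2 (y y' : X) : le y y' -> Fr le [set y; y'].
Proof.
move=> le_yy'; split; first by apply/set0Pn; exists y; rewrite set21.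
by move=> i j /set2P[->|->] /set2P[->|->]; auto.
Qed.

(* A maximum is an element below which lie the most elements of the chain. *)
Lemma Fr_has_max (x : {set X}) :
  Fr le x -> exists2 m, m \in x & {in x, forall j, le j m}.
Proof.
move=> [/set0Pn[i0 xi0] chain].
pose below i := #|[set k in x | le k i]|.
case: (arg_maxnP below xi0) => m xm m_max; exists m => // j xj.
have [//|le_mj] := chain j m xj xm.
have sub : [set k in x | le k m] \subset [set k in x | le k j].
  by apply/subsetP=> k; rewrite !inE => /andP[-> le_km]; exact: le_trans le_mj.
have : [set k in x | le k m] = [set k in x | le k j].
  by apply/eqP; rewrite eqEcard sub; exact: m_max.
by move/setP/(_ j); rewrite !inE xj le_refl /= => ->.
Qed.

Lemma Fr_max_eq (x0 : X) (x : {set X}) (m : X) :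
  m \in x -> {in x, forall j, le j m} -> Fr_max le x0 x = m.
Proof.
move=> xm m_max; rewrite /Fr_max; case: pickP => [i /andP[xi /forallP i_max] | no_max] /=.
  by apply: le_anti; rewrite m_max //=; have := i_max m; rewrite xm.
have := no_max m; rewrite xm /=; move/negbT/negP; case.
by apply/forall_inP=> j /m_max.
Qed.

Lemma Fr_maxP (x0 : X) (x : {set X}) :
  Fr le x -> Fr_max le x0 x \in x /\ {in x, forall j, le j (Fr_max le x0 x)}.
Proof. by case/Fr_has_max=> m xm m_max; rewrite (Fr_max_eq x0 xm m_max). Qed.

Lemma Fr_max_set1 (x0 y : X) : Fr_max le x0 [set y] = y.
Proof. by apply: Fr_max_eq; rewrite ?set11 // => j /set1P->. Qed.

Lemma Fr_max_set2 (x0 y y' : X) : le y y' -> Fr_max le x0 [set y; y'] = y'.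
Proof. by move=> le_yy'; apply: Fr_max_eq; rewrite ?set22 // => j /set2P[->|->]. Qed.

Lemma Fr_max_mono (x0 : X) (x x' : {set X}) :
  Fr le x -> Fr le x' -> Fr_le le x x' -> le (Fr_max le x0 x) (Fr_max le x0 x').
Proof.
move=> Fx Fx' [/subsetP sxx' _].
have [xm _] := Fr_maxP x0 Fx; have [_ x'_max] := Fr_maxP x0 Fx'.
exact: x'_max (sxx' _ xm).
Qed.

End FrOrder.

Section FrAction.

Variables (M : Type) (X : finType) (act : M -> X -> X) (le : rel X).
Hypothesis act_mono : forall a, {homo act a : i j / le i j}.

Lemma Fr_act_closed (a : M) (x : {set X}) : Fr le x -> Fr le (Fr_act act a x).
Proof.
move=> [/set0Pn[k xk] chain]; split; first by apply/set0Pn; exists (act a k); exact: imset_f.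
move=> _ _ /imsetP[i xi ->] /imsetP[j xj ->].
by case: (chain i j xi xj) => [le_ij | le_ji]; [left | right]; apply: act_mono.
Qed.

Lemma Fr_act_mono (a : M) (x y : {set X}) :
  Fr_le le x y -> Fr_le le (Fr_act act a x) (Fr_act act a y).
Proof.
move=> [sxy lexy]; split; first exact: imsetS.
move=> _ _ /imsetP[i xi ->] /setDP[/imsetP[j yj ->] axNaj].
have xNj : j \notin x by apply: contra axNaj; exact: imset_f.
have [le_ij _] : le i j /\ i != j by apply: lexy; rewrite // inE xNj.
split; first exact: act_mono.
by apply: contraNneq axNaj => <-; exact: imset_f.
Qed.

Lemma Fr_act_preimage (a : M) (y z : {set X}) :
  z \subset Fr_act act a y -> Fr_act act a [set i in y | act a i \in z] = z.
Proof.
move=> /subsetP szy; apply/setP=> k; apply/imsetP/idP=> [[i] | zk].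
  by rewrite inE => /andP[_ zai] ->.
by have /imsetP[i yi ki] := szy k zk; exists i; rewrite // inE yi -ki zk.
Qed.

Lemma Fr_action (mul : M -> M -> M) (one : M) :
  (forall i, act one i = i) -> (forall a b i, act (mul a b) i = act a (act b i)) ->
  is_action mul one (Fr le) (Fr_act act).
Proof.
move=> act1 actM; split=> [a x|]; first exact: Fr_act_closed.
split=> [x _ | a b x _]; first by rewrite /Fr_act (eq_imset _ act1) imset_id.
by rewrite /Fr_act -imset_comp; apply: eq_imset => i /=.
Qed.

Hypotheses (le_refl : reflexive le) (le_anti : antisymmetric le)
           (le_trans : transitive le).

Lemma Fr_le_preimage (a : M) (y z : {set X}) :
  Fr le y -> Fr_le le z (Fr_act act a y) ->
  Fr_le le [set i in y | act a i \in z] y.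
Proof.
move=> [_ chain] [_ lez]; split; first by apply/subsetP=> i /setIdP[].
move=> i j /setIdP[yi zai] /setDP[yj]; rewrite inE yj /= => zNaj.
have [le_aij neq_aij] : le (act a i) (act a j) /\ act a i != act a j.
  by apply: lez; rewrite // inE zNaj imset_f.
have neq_ij : i != j by apply: contraNneq neq_aij => ->.
split=> //; case: (chain i j yi yj) => // le_ji.
by case/negP: neq_aij; apply/eqP/le_anti; rewrite le_aij act_mono.
Qed.

Lemma Fr_strong : is_strong (Fr le) (Fr_act act) (Fr_le le).
Proof.
move=> y a Fy z; split=> [[x [Fx [le_xy ->]]] | [Fz le_zay]].
  by split; [exact: Fr_act_closed | exact: Fr_act_mono].
have [[ne_z _] [szy _]] := (Fz, le_zay).
exists [set i in y | act a i \in z]; rewrite Fr_act_preimage //.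
split; last by split; first exact: Fr_le_preimage.
apply: Fr_subset Fy _ _; first by apply/subsetP=> i /setIdP[].
apply: contraNneq ne_z => /(congr1 (Fr_act act a)).
by rewrite Fr_act_preimage // /Fr_act imset0 => ->.
Qed.

Lemma Fr_max_act (x0 : X) (a : M) (x : {set X}) :
  Fr le x -> Fr_max le x0 (Fr_act act a x) = act a (Fr_max le x0 x).
Proof.
move=> Fx; have [xm m_max] := Fr_maxP le_refl le_anti le_trans x0 Fx.
apply: Fr_max_eq => //; first exact: imset_f.
by move=> _ /imsetP[j xj ->]; apply/act_mono/m_max.
Qed.

Lemma Fr_max_epimorphism (x0 : X) :
  is_epimorphism (Fr le) (Fr_act act) (Fr_le le)
                 (fun _ : X => True) act (fun i j => le i j) (Fr_max le x0).
Proof.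
split=> //; split=> [y _|].
  by exists [set y]; split; [exact: Fr_set1 | exact: Fr_max_set1].
split=> [a x Fx|y y' _ _]; first exact: Fr_max_act.
split=> [le_yy' | [x [x' [Fx Fx' le_xx' <- <-]]]]; last exact: Fr_max_mono.
exists [set y], [set y; y']; split.
- exact: Fr_set1.
- exact: Fr_set2.
- exact: Fr_le_set1_set2.
- exact: Fr_max_set1.
- exact: Fr_max_set2.
Qed.

End FrAction.

Theorem lemma2p2 (M : Type) (mul : M -> M -> M) (one : M)
  (X : finType) (act : M -> X -> X) (le : rel X) :
  is_monoid mul one ->
  is_MPO mul one (fun _ : X => True) act (fun i j => le i j) ->
  (is_MPO mul one (Fr le) (Fr_act act) (Fr_le le) /\
   is_strong (Fr le) (Fr_act act) (Fr_le le)) /\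
  (forall x0 : X,
     is_epimorphism (Fr le) (Fr_act act) (Fr_le le)
                    (fun _ : X => True) act (fun i j => le i j) (Fr_max le x0)).
Proof.
move=> _ [[_ [act1 actM]] [[refl [anti trans]] mono]].
have le_refl : reflexive le by move=> i; exact: refl.
have le_anti : antisymmetric le by move=> i j /andP[]; exact: anti.
have le_trans : transitive le by move=> j i k; exact: trans.
have act_mono : forall a, {homo act a : i j / le i j} by move=> a i j; exact: mono.
have Fr_act_action := Fr_action act_mono (fun i => act1 i I) (fun a b i => actM a b i I).
split; last by move=> x0; exact: Fr_max_epimorphism.
split; last exact: Fr_strong.
split=> //; split=> [|a x y _ _]; [exact: Fr_le_partial_order | exact: Fr_act_mono].
Qed.
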